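(* Assume $\ker(K)\cap\ker(D)=\{0\}$ and fix $\delta\ge0$ and data $y^\delta$. Let $\{\Psi_k\}_{k\in\mathbb{N}}$ be a sequence of reconstructors and $\Psi^*$ a reconstructor such that $\sup_{y\in\mathcal{Y}^\delta}\|\,|D\Psi_k(y)|-|D\Psi^*(y)|\,\|_1\to0$ as $k\to\infty$, where $\mathcal{Y}^\delta=\{y\in\mathbb{R}^m:\inf_{x\in\mathcal{X}}\|Kx-y\|_2\le\delta\}$. For each $k$ let $x^*_{\Psi_k,\delta}$ be the unique minimizer over $\mathcal{X}$ of $\mathcal{J}_{\Psi_k,\delta}(x)=\|Kx-y^\delta\|_2^2+\lambda\|w(\Psi_k(y^\delta))\odot|Dx|\|_1$, and let $x^*_{\Psi^*,\delta}$ denote the unique minimizer over $\mathcal{X}$ of $\mathcal{J}_{\Psi^*,\delta}(x)=\|Kx-y^\delta\|_2^2+\lambda\|w(\Psi^*(y^\delta))\odot|Dx|\|_1$. Then $\{x^*_{\Psi_k,\delta}\}_{k\in\mathbb{N}}$ has a convergent subsequence whose limit is $x^*_{\Psi^*,\delta}$.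
   Context: Let $K\in\mathbb{R}^{m\times n}$ with $m\le n$, and let $D_h,D_v\in\mathbb{R}^{n\times n}$ be the discrete horizontal and vertical difference operators; $Dx=\begin{bmatrix}D_hx\\ D_vx\end{bmatrix}\in\mathbb{R}^{2n}$, and $|Dx|\in\mathbb{R}^n$, $(|Dx|)_i=\sqrt{(D_hx)_i^2+(D_vx)_i^2}$. $\mathcal{X}=\{x\in\mathbb{R}^n: x_i\ge 0\ \forall i\}$. Fix $\lambda>0$, $\eta>0$, $p\in(0,1)$, and for $\tilde x\in\mathbb{R}^n$ define $(w(\tilde{x}))_i=\big(\eta/\sqrt{\eta^2+(|D\tilde{x}|)_i^2}\big)^{1-p}$. A reconstructor is a Lipschitz continuous map $\Psi:\mathbb{R}^m\to\mathbb{R}^n$. The data is $y^\delta=Kx^{GT}+e$ with $x^{GT}\in\mathcal{X}$ and $\|e\|_2\le\delta$. $\odot$ is the entrywise product. *)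

From HB Require Import structures.
From mathcomp Require Import all_boot all_order all_algebra.
From mathcomp Require Import all_classical all_reals all_analysis.
Set Implicit Arguments. Unset Strict Implicit. Unset Printing Implicit Defensive.
Import Order.TTheory GRing.Theory Num.Theory.
Local Open Scope classical_set_scope.
Local Open Scope ring_scope.

Section Defs.
Variable R : realType.

Definition norm2 (k : nat) (v : 'cV[R]_k) : R := Num.sqrt (\sum_i (v i 0) ^+ 2).
Definition norm1 (k : nat) (v : 'cV[R]_k) : R := \sum_i `|v i 0|.

Definition absD (n : nat) (Dh Dv : 'M[R]_n) (x : 'cV[R]_n) : 'cV[R]_n :=
  \col_i Num.sqrt ((Dh *m x) i 0 ^+ 2 + (Dv *m x) i 0 ^+ 2).

Definition hadamard (n : nat) (u v : 'cV[R]_n) : 'cV[R]_n := \col_i (u i 0 * v i 0).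

Definition weight (n : nat) (Dh Dv : 'M[R]_n) (eta p : R) (xt : 'cV[R]_n) : 'cV[R]_n :=
  \col_i ((eta / Num.sqrt (eta ^+ 2 + (absD Dh Dv xt) i 0 ^+ 2)) `^ (1 - p)).

Definition Xset (n : nat) : set 'cV[R]_n := [set x | forall i, 0 <= x i 0].

Definition reconstructor (m n : nat) (Psi : 'cV[R]_m -> 'cV[R]_n) : Prop :=
  exists L : R, forall y1 y2, norm2 (Psi y1 - Psi y2) <= L * norm2 (y1 - y2).

Definition Ydelta (m n : nat) (K : 'M[R]_(m, n)) (delta : R) : set 'cV[R]_m :=
  [set y | inf [set norm2 (K *m x - y) | x in @Xset n] <= delta].

Definition Jobj (m n : nat) (K : 'M[R]_(m, n)) (Dh Dv : 'M[R]_n) (lam eta p : R)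
  (ydelta : 'cV[R]_m) (Psi : 'cV[R]_m -> 'cV[R]_n) (x : 'cV[R]_n) : R :=
  norm2 (K *m x - ydelta) ^+ 2
  + lam * norm1 (hadamard (weight Dh Dv eta p (Psi ydelta)) (absD Dh Dv x)).

Definition unique_minimizer (n : nat) (f : 'cV[R]_n -> R) (x : 'cV[R]_n) : Prop :=
  Xset x /\ (forall z, Xset z -> f x <= f z) /\
  (forall z, Xset z -> (forall z', Xset z' -> f z <= f z') -> z = x).

End Defs.

From HB Require Import structures.
From mathcomp Require Import all_boot all_order all_algebra.
From mathcomp Require Import all_classical all_reals all_analysis.
From mathcomp Require Import ring lra.
Set Implicit Arguments. Unset Strict Implicit. Unset Printing Implicit Defensive.
Import Order.TTheory GRing.Theory Num.Theory.
Import numFieldNormedType.Exports.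
Local Open Scope classical_set_scope.
Local Open Scope ring_scope.

(* Since y^δ lies in Y^δ, the uniform convergence of |DΨ_k| gives entrywise
   convergence of the weights w(Ψ_k(y^δ)) to the positive weights w(Ψ⋆(y^δ)).
   Hence for every ρ > 0 and all large k, J_{Ψ⋆} <= (1+ρ) J_{Ψ_k} and
   J_{Ψ_k} <= (1+ρ) J_{Ψ⋆} everywhere, so J_{Ψ⋆}(x_k) <= (1+ρ)^2 J_{Ψ⋆}(x⋆).
   On the other hand J_{Ψ⋆} is convex and continuous with unique minimizer x⋆
   on X: minimizing it over the compact set X ∩ {‖x - x⋆‖ = ε} and using
   convexity along segments issued from x⋆ gives c > 0 with
   J_{Ψ⋆} >= J_{Ψ⋆}(x⋆) + c on X outside the ε-ball.  So the whole sequence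
   converges to x⋆ and the subsequence is the identity. *)

Section Norms.
Variables (R : realType) (k : nat).
Implicit Types (u v : 'cV[R]_k).

Lemma norm2_ge0 u : 0 <= norm2 u.
Proof. exact: sqrtr_ge0. Qed.

Lemma norm2_sqr u : norm2 u ^+ 2 = \sum_i u i 0 ^+ 2.
Proof. by rewrite sqr_sqrtr // sumr_ge0 // => i _; exact: sqr_ge0. Qed.

Lemma norm20 : norm2 (0 : 'cV[R]_k) = 0.
Proof. by rewrite /norm2 big1 ?sqrtr0 // => i _; rewrite mxE expr0n. Qed.

Lemma norm2N u : norm2 (- u) = norm2 u.
Proof. by congr Num.sqrt; apply: eq_bigr => i _; rewrite mxE sqrrN. Qed.

Lemma norm2Z t u : 0 <= t -> norm2 (t *: u) = t * norm2 u.
Proof.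
move=> t_ge0; rewrite /norm2 (eq_bigr (fun i => t ^+ 2 * u i 0 ^+ 2)).
  by rewrite -mulr_sumr sqrtrM ?sqr_ge0 // sqrtr_sqr ger0_norm.
by move=> i _; rewrite mxE exprMn.
Qed.

Lemma entry_le_norm2 u i : `|u i 0| <= norm2 u.
Proof.
rewrite -sqrtr_sqr ler_sqrt; last by rewrite sumr_ge0 // => j _; exact: sqr_ge0.
by rewrite (bigD1 i) //= lerDl sumr_ge0 // => j _; exact: sqr_ge0.
Qed.

Lemma norm1_ge0 u : 0 <= norm1 u.
Proof. exact: sumr_ge0. Qed.

Lemma entry_le_norm1 u i : `|u i 0| <= norm1 u.
Proof. by rewrite /norm1 (bigD1 i) //= lerDl sumr_ge0. Qed.

Lemma norm1_hadamard u v : (forall i, 0 <= u i 0) -> (forall i, 0 <= v i 0) ->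
  norm1 (hadamard u v) = \sum_i u i 0 * v i 0.
Proof. by move=> u0 v0; apply: eq_bigr => i _; rewrite mxE ger0_norm ?mulr_ge0. Qed.

End Norms.

Section Convexity.
Variable R : realType.

Lemma sqr_conv_le (t a b : R) : 0 <= t <= 1 ->
  ((1 - t) * a + t * b) ^+ 2 <= (1 - t) * a ^+ 2 + t * b ^+ 2.
Proof.
case/andP=> t0 t1; have : 0 <= t * (1 - t) * (a - b) ^+ 2.
  by rewrite mulr_ge0 ?sqr_ge0 ?mulr_ge0 ?subr_ge0.
nra.
Qed.

Lemma sqrt_sqr_addD (a b c d : R) :
  Num.sqrt ((a + c) ^+ 2 + (b + d) ^+ 2) <=
  Num.sqrt (a ^+ 2 + b ^+ 2) + Num.sqrt (c ^+ 2 + d ^+ 2).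
Proof.
set S := Num.sqrt (a ^+ 2 + b ^+ 2); set T := Num.sqrt (c ^+ 2 + d ^+ 2).
have S0 : 0 <= S := sqrtr_ge0 _; have T0 : 0 <= T := sqrtr_ge0 _.
have SE : S ^+ 2 = a ^+ 2 + b ^+ 2 by rewrite sqr_sqrtr // addr_ge0 ?sqr_ge0.
have TE : T ^+ 2 = c ^+ 2 + d ^+ 2 by rewrite sqr_sqrtr // addr_ge0 ?sqr_ge0.
have cauchy_schwarz : a * c + b * d <= S * T.
  have : (a * c + b * d) ^+ 2 <= (S * T) ^+ 2.
    by rewrite exprMn SE TE; have := sqr_ge0 (a * d - b * c); nra.
  have := mulr_ge0 S0 T0; nra.
rewrite -(ger0_norm (addr_ge0 S0 T0)) -sqrtr_sqr ler_sqrt ?sqr_ge0 //.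
by clearbody S T; nra.
Qed.

Lemma sqrt_sqr_addZ (t a b : R) : 0 <= t ->
  Num.sqrt ((t * a) ^+ 2 + (t * b) ^+ 2) = t * Num.sqrt (a ^+ 2 + b ^+ 2).
Proof. by move=> t0; rewrite !exprMn -mulrDr sqrtrM ?sqr_ge0 // sqrtr_sqr ger0_norm. Qed.

Lemma sqrt_sqr_add_conv_le (t a b c d : R) : 0 <= t <= 1 ->
  Num.sqrt (((1 - t) * a + t * c) ^+ 2 + ((1 - t) * b + t * d) ^+ 2) <=
  (1 - t) * Num.sqrt (a ^+ 2 + b ^+ 2) + t * Num.sqrt (c ^+ 2 + d ^+ 2).
Proof.
case/andP=> t0 t1; rewrite -!sqrt_sqr_addZ ?subr_ge0 //; exact: sqrt_sqr_addD.
Qed.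

Lemma norm2_sqr_conv_le k (t : R) (u v : 'cV[R]_k) : 0 <= t <= 1 ->
  norm2 ((1 - t) *: u + t *: v) ^+ 2 <= (1 - t) * norm2 u ^+ 2 + t * norm2 v ^+ 2.
Proof.
move=> t01; rewrite !norm2_sqr !mulr_sumr -big_split /=; apply: ler_sum => i _.
by rewrite !mxE sqr_conv_le.
Qed.

Lemma Xset_conv n (x1 x2 : 'cV[R]_n) t :
  Xset x1 -> Xset x2 -> 0 <= t <= 1 -> Xset ((1 - t) *: x1 + t *: x2).
Proof.
by move=> X1 X2 /andP[t0 t1] i; rewrite !mxE addr_ge0 ?mulr_ge0 ?subr_ge0 ?X1 ?X2.
Qed.

End Convexity.

Section Objective.
Variables (R : realType) (m n : nat) (K : 'M[R]_(m, n)) (Dh Dv : 'M[R]_n).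
Variables (lam eta p : R) (y : 'cV[R]_m).
Hypothesis lam_ge0 : 0 <= lam.

Lemma absDE x i :
  absD Dh Dv x i 0 = Num.sqrt ((Dh *m x) i 0 ^+ 2 + (Dv *m x) i 0 ^+ 2).
Proof. exact: mxE. Qed.

Lemma absD_ge0 x i : 0 <= absD Dh Dv x i 0.
Proof. by rewrite absDE sqrtr_ge0. Qed.

Lemma weightE x i : weight Dh Dv eta p x i 0 =
  (eta / Num.sqrt (eta ^+ 2 + absD Dh Dv x i 0 ^+ 2)) `^ (1 - p).
Proof. exact: mxE. Qed.

Lemma weight_ge0 x i : 0 <= weight Dh Dv eta p x i 0.
Proof. by rewrite mxE powR_ge0. Qed.

Lemma weight_gt0 x i : 0 < eta -> 0 < weight Dh Dv eta p x i 0.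
Proof.
move=> eta_gt0; rewrite mxE powR_gt0 // divr_gt0 // sqrtr_gt0.
by rewrite ltr_wpDr ?sqr_ge0 ?exprn_gt0.
Qed.

Lemma absD_conv_le x1 x2 t i : 0 <= t <= 1 ->
  absD Dh Dv ((1 - t) *: x1 + t *: x2) i 0 <=
  (1 - t) * absD Dh Dv x1 i 0 + t * absD Dh Dv x2 i 0.
Proof.
move=> t01; have conv M : (M *m ((1 - t) *: x1 + t *: x2)) i 0 =
    (1 - t) * (M *m x1) i 0 + t * (M *m x2) i 0.
  by rewrite mulmxDr -!scalemxAr !mxE.
by rewrite !absDE !conv sqrt_sqr_add_conv_le.
Qed.

Lemma Jobj_ge0 Psi x : 0 <= Jobj K Dh Dv lam eta p y Psi x.
Proof. by rewrite addr_ge0 ?sqr_ge0 ?mulr_ge0 ?norm1_ge0. Qed.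

Lemma Jobj_conv_le Psi x1 x2 t : 0 <= t <= 1 ->
  Jobj K Dh Dv lam eta p y Psi ((1 - t) *: x1 + t *: x2) <=
  (1 - t) * Jobj K Dh Dv lam eta p y Psi x1 + t * Jobj K Dh Dv lam eta p y Psi x2.
Proof.
move=> t01; set w := weight Dh Dv eta p (Psi y).
have w0 := weight_ge0 (Psi y); have a0 := absD_ge0.
have fit : K *m ((1 - t) *: x1 + t *: x2) - y =
    (1 - t) *: (K *m x1 - y) + t *: (K *m x2 - y).
  by rewrite mulmxDr -!scalemxAr !scalerBr addrACA -opprD -scalerDl subrK scale1r.
have reg : norm1 (hadamard w (absD Dh Dv ((1 - t) *: x1 + t *: x2))) <=
    (1 - t) * norm1 (hadamard w (absD Dh Dv x1)) +
    t * norm1 (hadamard w (absD Dh Dv x2)).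
  rewrite !norm1_hadamard // !mulr_sumr -big_split /=; apply: ler_sum => i _.
  by rewrite mulrCA (mulrCA t) -mulrDr ler_wpM2l ?absD_conv_le.
rewrite /Jobj fit.
set a1 := norm2 (K *m x1 - y) ^+ 2; set a2 := norm2 (K *m x2 - y) ^+ 2.
set g1 := norm1 (hadamard w (absD Dh Dv x1)) in reg *.
set g2 := norm1 (hadamard w (absD Dh Dv x2)) in reg *.
rewrite [leRHS](_ : _ = ((1 - t) * a1 + t * a2) + lam * ((1 - t) * g1 + t * g2)); last by ring.
exact: lerD (norm2_sqr_conv_le _ _ t01) (ler_wpM2l lam_ge0 reg).
Qed.

Lemma Jobj_weight_le Psi1 Psi2 c x : 1 <= c ->
  (forall i, weight Dh Dv eta p (Psi1 y) i 0 <= c * weight Dh Dv eta p (Psi2 y) i 0) ->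
  Jobj K Dh Dv lam eta p y Psi1 x <= c * Jobj K Dh Dv lam eta p y Psi2 x.
Proof.
move=> c_ge1 w_le; have a0 := absD_ge0 x; have w0 := weight_ge0.
rewrite /Jobj mulrDr; apply: lerD; first by rewrite ler_peMl ?sqr_ge0.
rewrite mulrCA ler_wpM2l // !norm1_hadamard // mulr_sumr.
by apply: ler_sum => i _; rewrite mulrA ler_wpM2r.
Qed.

End Objective.

Section RealContinuity.
Variables (R : realType) (T : topologicalType).
Implicit Types f g : T -> R.

Lemma continuousD_fun f g : continuous f -> continuous g -> continuous (fun x => f x + g x).
Proof. by move=> cf cg x; apply: cvgD; [exact: cf | exact: cg]. Qed.

Lemma continuousM_fun f g : continuous f -> continuous g -> continuous (fun x => f x * g x).
Proof. by move=> cf cg x; apply: cvgM; [exact: cf | exact: cg]. Qed.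

Lemma continuousV_fun f : (forall x, f x != 0) -> continuous f ->
  continuous (fun x => (f x)^-1).
Proof. by move=> f0 cf x; apply: cvgV; [exact: f0 | exact: cf]. Qed.

Lemma continuous_sqr f : continuous f -> continuous (fun x => f x ^+ 2).
Proof. by move=> cf; under eq_fun do rewrite expr2; exact: continuousM_fun. Qed.

Lemma continuous_sqrt f : continuous f -> continuous (fun x => Num.sqrt (f x)).
Proof. by move=> cf x; apply: continuous_comp; [exact: cf | exact: sqrt_continuous]. Qed.

Lemma continuous_norm f : continuous f -> continuous (fun x => `|f x|).
Proof. by move=> cf x; apply: cvg_norm; exact: cf. Qed.

Lemma continuous_sum k (F : 'I_k -> T -> R) :
  (forall i, continuous (F i)) -> continuous (fun x => \sum_i F i x).
Proof. by move=> cF; apply: continuous_big => [|i _]; [exact: add_continuous | exact: cF]. Qed.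

End RealContinuity.

(* Continuity is stated on row vectors because Heine-Borel
   ([bounded_closed_compact]) and [EVT_min_rV] are only available for ['rV]. *)
Section MatrixContinuity.
Variables (R : realType) (n : nat).

Lemma mulmx_trmx_entry_continuous a (M : 'M[R]_(a, n)) i :
  continuous (fun v : 'rV[R]_n => (M *m v^T) i 0).
Proof.
under eq_fun do rewrite mxE.
apply: continuous_sum => j; apply: continuousM_fun; first exact: cst_continuous.
under eq_fun do rewrite mxE; exact: coord_continuous.
Qed.

Lemma norm2_affine_continuous a (M : 'M[R]_(a, n)) (y : 'cV[R]_a) :
  continuous (fun v : 'rV[R]_n => norm2 (M *m v^T - y)).
Proof.
apply: continuous_sqrt; apply: continuous_sum => i; apply: continuous_sqr.
under eq_fun do rewrite mxE.
apply: continuousD_fun; first exact: mulmx_trmx_entry_continuous.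
exact: cst_continuous.
Qed.

Lemma absD_trmx_continuous (Dh Dv : 'M[R]_n) i :
  continuous (fun v : 'rV[R]_n => absD Dh Dv v^T i 0).
Proof.
under eq_fun do rewrite absDE.
apply/continuous_sqrt/continuousD_fun; apply: continuous_sqr;
  exact: mulmx_trmx_entry_continuous.
Qed.

Lemma Jobj_trmx_continuous m (K : 'M[R]_(m, n)) (Dh Dv : 'M[R]_n) lam eta p y Psi :
  continuous (fun v : 'rV[R]_n => Jobj K Dh Dv lam eta p y Psi v^T).
Proof.
apply: continuousD_fun; first exact/continuous_sqr/norm2_affine_continuous.
apply: continuousM_fun; first exact: cst_continuous.
apply: continuous_sum => i; apply: continuous_norm.
under eq_fun do rewrite mxE.
apply: continuousM_fun; first exact: cst_continuous.
exact: absD_trmx_continuous.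
Qed.

End MatrixContinuity.

Lemma weight_profile_continuous (R : realType) (eta q : R) : 0 < eta ->
  continuous (fun t : R => (eta / Num.sqrt (eta ^+ 2 + t ^+ 2)) `^ q).
Proof.
move=> eta_gt0 t; pose f s := eta / Num.sqrt (eta ^+ 2 + s ^+ 2).
have den_gt0 s : 0 < Num.sqrt (eta ^+ 2 + s ^+ 2).
  by rewrite sqrtr_gt0 ltr_wpDr ?sqr_ge0 ?exprn_gt0.
have cf : continuous f.
  apply: continuousM_fun; first exact: cst_continuous.
  apply: continuousV_fun => [s|]; first by rewrite gt_eqF.
  apply: continuous_sqrt; apply: continuousD_fun; first exact: cst_continuous.
  by apply: continuous_sqr => s; exact: cvg_id.
have cpow : {for f t, continuous (fun a : R => a `^ q)}.
  apply: differentiable_continuous; apply/derivable1_diffP; apply: derivable_powR.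
  by rewrite in_itv /= andbT divr_gt0.
exact: continuous_comp (cf t) cpow.
Qed.

Definition well_posed_min (R : realType) n (J : 'cV[R]_n -> R) (x0 : 'cV[R]_n) :=
  forall eps, 0 < eps ->
  exists2 c, 0 < c & forall x, Xset x -> eps <= norm2 (x - x0) -> J x0 + c <= J x.

Section WellPosed.
Variables (R : realType) (n : nat).
Implicit Types (J : 'cV[R]_n -> R).

Lemma Xset_sphere_compact (x0 : 'cV[R]_n) eps :
  compact [set v : 'rV[R]_n | Xset v^T /\ norm2 (v^T - x0) = eps].
Proof.
have entry_continuous i : continuous (fun v : 'rV[R]_n => v^T i 0).
  by under eq_fun do rewrite mxE; exact: coord_continuous.
apply: bounded_closed_compact.
  exists (eps + norm1 x0); split; first exact: num_real.
  move=> M M_gt v /= [_ v_eps]; rewrite [`|v|]mx_normrE; apply: bigmax_le.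
    by apply: le_trans (ltW M_gt); rewrite -v_eps addr_ge0 ?norm2_ge0 ?norm1_ge0.
  case=> i j _ /=; rewrite (ord1 i); apply: le_trans (ltW M_gt).
  have -> : v 0 j = (v^T - x0) j 0 + x0 j 0 by rewrite !mxE subrK.
  by rewrite (le_trans (ler_normD _ _)) // -v_eps lerD ?entry_le_norm2 ?entry_le_norm1.
have -> : [set v : 'rV[R]_n | Xset v^T /\ norm2 (v^T - x0) = eps] =
    \bigcap_i ((fun v => v^T i 0) @^-1` [set r | 0 <= r]) `&`
    ((fun v => norm2 (v^T - x0)) @^-1` [set eps]).
  apply/seteqP; split=> v /= [v0 v_eps]; split=> // i; last by apply: v0.
  by move=> _; exact: v0.
apply: closedI.
  apply: closed_bigI => i _; apply: preimage_closed; last exact: closed_ge.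
  by move=> v _; exact: entry_continuous.
apply: preimage_closed; last exact: closed_eq.
move=> v _; under eq_fun do rewrite -[_^T]mul1mx; exact: norm2_affine_continuous.
Qed.

Lemma segment_meets_sphere (x0 x : 'cV[R]_n) eps : Xset x0 -> Xset x -> 0 < eps ->
  eps <= norm2 (x - x0) -> exists2 t, 0 < t <= 1 &
  Xset ((1 - t) *: x0 + t *: x) /\ norm2 ((1 - t) *: x0 + t *: x - x0) = eps.
Proof.
move=> X0 Xx eps_gt0 far; have d_gt0 := lt_le_trans eps_gt0 far.
have t01 : 0 < eps / norm2 (x - x0) <= 1 by rewrite divr_gt0 ?ler_pdivrMr ?mul1r.
exists (eps / norm2 (x - x0)) => //; split.
  by apply: Xset_conv => //; case/andP: t01 => /ltW ->.
have -> : forall t, (1 - t) *: x0 + t *: x - x0 = t *: (x - x0).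
  by move=> t; apply/matrixP => i j; rewrite !mxE; ring.
by rewrite norm2Z ?divfK ?gt_eqF // divr_ge0 ?ltW.
Qed.

Lemma unique_minimizer_well_posed J (x0 : 'cV[R]_n) :
  (forall x t, Xset x -> 0 <= t <= 1 ->
     J ((1 - t) *: x0 + t *: x) <= (1 - t) * J x0 + t * J x) ->
  continuous (fun v : 'rV[R]_n => J v^T) ->
  unique_minimizer J x0 -> well_posed_min J x0.
Proof.
move=> Jconv Jcont [X0 [Jmin Juniq]] eps eps_gt0.
have [[x1 [X1 far1]]|] := pselect (exists x, Xset x /\ eps <= norm2 (x - x0)); last first.
  by move=> nofar; exists 1 => // x Xx far; case: nofar; exists x.
pose S := [set v : 'rV[R]_n | Xset v^T /\ norm2 (v^T - x0) = eps].
have S0 : S !=set0.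
  have [t _ z_S] := segment_meets_sphere X0 X1 eps_gt0 far1.
  by exists ((1 - t) *: x0 + t *: x1)^T; rewrite /S /= trmxK.
have [v] := EVT_min_rV S0 (@Xset_sphere_compact x0 eps) (continuous_subspaceT Jcont).
rewrite inE => -[Xz z_eps] z_min; set z := v^T in Xz z_eps z_min.
have Jz_gt : J x0 < J z.
  rewrite lt_def Jmin // andbT; apply/eqP => Jz.
  have z_x0 : z = x0 by apply: Juniq => // x' Xx'; rewrite Jz; exact: Jmin.
  by move: z_eps; rewrite z_x0 subrr norm20 => eps0; rewrite eps0 ltxx in eps_gt0.
exists (J z - J x0); first by rewrite subr_gt0.
move=> x Xx far; have [t t01 [Xy y_eps]] := segment_meets_sphere X0 Xx eps_gt0 far.
have Jz_le : J z <= J ((1 - t) *: x0 + t *: x).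
  by rewrite -[_ + _]trmxK; apply: z_min; rewrite inE /S /= trmxK.
case/andP: t01 => t_gt0 t_le1.
have := Jconv x t Xx; rewrite (ltW t_gt0) t_le1 => /(_ isT); nra.
Qed.

End WellPosed.

Section Stability.
Variables (R : realType) (T : Type) (F : set_system T).
Context {FF : Filter F}.

Lemma cvg_gt0_ratio_near (u : T -> R) (a rho : R) : 0 < a -> 0 < rho -> u @ F --> a ->
  \forall t \near F, u t <= (1 + rho) * a /\ a <= (1 + rho) * u t.
Proof.
move=> a_gt0 rho_gt0 u_a; set s := rho / (1 + rho).
have rho1_gt0 : 0 < 1 + rho by rewrite ltr_wpDr ?ltW.
have sE : s * (1 + rho) = rho by rewrite divfK ?gt_eqF.
have s_gt0 : 0 < s * a by rewrite mulr_gt0 ?divr_gt0.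
move/cvgrPdist_le : u_a => /(_ _ s_gt0); apply: filterS => t.
by rewrite ler_distl => /andP[lo hi]; split; nra.
Qed.

Lemma norm1_cvg_entry k (u : T -> 'cV[R]_k) v i :
  (forall eps, 0 < eps -> \forall t \near F, norm1 (u t - v) <= eps) ->
  u t i 0 @[t --> F] --> v i 0.
Proof.
move=> u_v; apply/cvgrPdist_le => eps /u_v; apply: filterS => t; apply: le_trans.
by rewrite distrC (_ : _ - _ = (u t - v) i 0) ?entry_le_norm1 // !mxE.
Qed.

Lemma minimizers_cvg n (Js : 'cV[R]_n -> R) (Jt : T -> 'cV[R]_n -> R) x0
    (xt : T -> 'cV[R]_n) :
  well_posed_min Js x0 -> Xset x0 -> 0 <= Js x0 ->
  (forall t, Xset (xt t)) -> (forall t z, Xset z -> Jt t (xt t) <= Jt t z) ->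
  (forall rho, 0 < rho -> \forall t \near F,
     forall x, Js x <= (1 + rho) * Jt t x /\ Jt t x <= (1 + rho) * Js x) ->
  norm2 (xt t - x0) @[t --> F] --> 0.
Proof.
move=> wp X0 J0_ge0 Xt xt_min J_cmp; apply/cvgrPdist_le => eps eps_gt0.
have [c c_gt0 gap] := wp eps eps_gt0; set J0 := Js x0 in J0_ge0 gap *.
pose rho := c / (3 * J0 + c).
have den_gt0 : 0 < 3 * J0 + c by rewrite ltr_wpDl ?mulr_ge0.
have rho_gt0 : 0 < rho by rewrite divr_gt0.
have rho_le1 : rho <= 1 by rewrite ler_pdivrMr // mul1r lerDr mulr_ge0.
have rhoE : rho * (3 * J0 + c) = c by rewrite divfK ?gt_eqF.
have rho2 : 0 <= rho * (1 - rho) * J0 by rewrite mulr_ge0 // mulr_ge0 ?subr_ge0 // ltW.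
have small : (1 + rho) ^+ 2 * J0 < J0 + c by nra.
apply: filterS (J_cmp rho rho_gt0) => t cmp.
rewrite sub0r normrN ger0_norm ?norm2_ge0 // leNgt; apply/negP => /ltW far.
have := gap _ (Xt t) far; rewrite leNgt => /negP; apply.
apply: le_lt_trans small; apply: le_trans (cmp (xt t)).1 _.
rewrite expr2 -mulrA ler_pM2l ?addr_gt0 //.
exact: le_trans (xt_min t x0 X0) (cmp x0).2.
Qed.

End Stability.

Section WeightLimits.
Variables (R : realType) (m n : nat) (K : 'M[R]_(m, n)) (Dh Dv : 'M[R]_n).
Variables (lam eta p : R) (y : 'cV[R]_m) (T : Type) (F : set_system T).
Context {FF : Filter F}.
Hypotheses (lam_ge0 : 0 <= lam) (eta_gt0 : 0 < eta).

Lemma weight_cvg (u : T -> 'cV[R]_n) x i :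
  absD Dh Dv (u t) i 0 @[t --> F] --> absD Dh Dv x i 0 ->
  weight Dh Dv eta p (u t) i 0 @[t --> F] --> weight Dh Dv eta p x i 0.
Proof.
move=> absD_cvg; rewrite weightE; under eq_fun do rewrite weightE.
apply: (@continuous_cvg _ _ _ _ _ (fun t => absD Dh Dv (u t) i 0)
  (fun s => (eta / Num.sqrt (eta ^+ 2 + s ^+ 2)) `^ (1 - p))) absD_cvg.
exact: weight_profile_continuous.
Qed.

Lemma Jobj_ratio_near (Psit : T -> 'cV[R]_m -> 'cV[R]_n) Psi0 rho : 0 < rho ->
  (forall i, weight Dh Dv eta p (Psit t y) i 0 @[t --> F] --> weight Dh Dv eta p (Psi0 y) i 0) ->
  \forall t \near F, forall x,
    Jobj K Dh Dv lam eta p y Psi0 x <= (1 + rho) * Jobj K Dh Dv lam eta p y (Psit t) x /\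
    Jobj K Dh Dv lam eta p y (Psit t) x <= (1 + rho) * Jobj K Dh Dv lam eta p y Psi0 x.
Proof.
move=> rho_gt0 w_cvg; have rho_ge1 : 1 <= 1 + rho by rewrite lerDl ltW.
have w_near : \forall t \near F, forall i,
    weight Dh Dv eta p (Psit t y) i 0 <= (1 + rho) * weight Dh Dv eta p (Psi0 y) i 0 /\
    weight Dh Dv eta p (Psi0 y) i 0 <= (1 + rho) * weight Dh Dv eta p (Psit t y) i 0.
  apply: filter_forall => i.
  exact: cvg_gt0_ratio_near (weight_gt0 Dh Dv p _ _ eta_gt0) rho_gt0 (w_cvg i).
apply: filterS w_near => t w_near x.
by split; apply: Jobj_weight_le => // i; have [] := w_near i.
Qed.

End WeightLimits.

Lemma data_in_Ydelta (R : realType) m n (K : 'M[R]_(m, n)) delta x e :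
  Xset x -> norm2 e <= delta -> Ydelta K delta (K *m x + e).
Proof.
move=> Xx e_le; apply: le_trans e_le.
have -> : norm2 e = norm2 (K *m x - (K *m x + e)).
  by rewrite opprD addrA subrr add0r norm2N.
have lb : has_lbound [set norm2 (K *m z - (K *m x + e)) | z in @Xset R n].
  by exists 0 => _ [z _ <-]; exact: norm2_ge0.
by apply: (ge_inf lb); exists x.
Qed.

Theorem corollary1 (R : realType) (m n : nat) (K : 'M[R]_(m, n)) (Dh Dv : 'M[R]_n)
  (lam eta p delta : R) (xGT : 'cV[R]_n) (e ydelta : 'cV[R]_m)
  (Psi : nat -> 'cV[R]_m -> 'cV[R]_n) (Psistar : 'cV[R]_m -> 'cV[R]_n)
  (xs : nat -> 'cV[R]_n) (xstar : 'cV[R]_n) :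
  (m <= n)%N ->
  0 < lam -> 0 < eta -> 0 < p -> p < 1 ->
  (forall x : 'cV[R]_n, K *m x = 0 -> Dh *m x = 0 -> Dv *m x = 0 -> x = 0) ->
  0 <= delta ->
  Xset xGT -> norm2 e <= delta -> ydelta = K *m xGT + e ->
  (forall k, reconstructor (Psi k)) -> reconstructor Psistar ->
  (forall eps : R, 0 < eps -> exists N : nat, forall k : nat, (N <= k)%N ->
     forall y, Ydelta K delta y ->
       norm1 (absD Dh Dv (Psi k y) - absD Dh Dv (Psistar y)) <= eps) ->
  (forall k, unique_minimizer (Jobj K Dh Dv lam eta p ydelta (Psi k)) (xs k)) ->
  unique_minimizer (Jobj K Dh Dv lam eta p ydelta Psistar) xstar ->
  exists phi : nat -> nat, {homo phi : a b / (a < b)%N} /\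
    (norm2 (xs (phi k) - xstar) @[k --> \oo] --> 0).
Proof.
move=> _ /ltW lam_ge0 eta_gt0 _ _ _ _ XxGT e_le y_def _ _ unif xs_min xstar_min.
have y_Y : Ydelta K delta ydelta by rewrite y_def; exact: data_in_Ydelta.
have w_cvg i : weight Dh Dv eta p (Psi k ydelta) i 0 @[k --> \oo] -->
    weight Dh Dv eta p (Psistar ydelta) i 0.
  apply: (weight_cvg eta_gt0); apply: norm1_cvg_entry => eps /unif[N N_near].
  by exists N => // k /N_near; apply.
exists id; split => //.
apply: minimizers_cvg (fun k => (xs_min k).1) (fun k => (xs_min k).2.1) _.
- apply: unique_minimizer_well_posed xstar_min => [x t _|]; first exact: Jobj_conv_le.
  exact: Jobj_trmx_continuous.
- exact: xstar_min.1.
- exact: Jobj_ge0.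
- by move=> rho rho_gt0; apply: Jobj_ratio_near.
Qed.
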